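(* Let $q$ be a prime power and let $\mathcal{C}$ be a $\mathcal{GRS}(n,k,d)$ code over $\mathbb{F}_q$ with $d=n-k+1$, distinct evaluation points $\alpha_0,\dots,\alpha_{n-1}\in\mathbb{F}_q$ and non-zero column multipliers $v_0,\dots,v_{n-1}$. Let $\vec c\in\mathcal{C}$ and $\vec r\in\mathbb{F}_q^n$, let $E=\{i : c_i\neq r_i\}$, $\epsilon=|E|$, and assume $\epsilon>d/2$. Let $\Lambda(x)=\prod_{i\in E}(x-\alpha_i)$. Let $H_1(x),H_2(x)\in\mathbb{F}_q[x]$ be coprime polynomials and $A(x),B(x)\in\mathbb{F}_q[x]$ polynomials such that $$\Lambda(x)=A(x)H_1(x)+B(x)H_2(x),\qquad \deg A=\epsilon-\deg H_1,\qquad \deg B\le \epsilon-d+\deg H_1 .$$ Let $L\le n$, $\tau$ and $\tau_L$ be positive integers, put $w_1=\tau-\deg H_1$ and $w_2=\tau-d+\deg H_1$, assume $w_1,w_2\ge 0$, and for $i=0,\dots,L-1$ let $P_i=(H_2(\alpha_i):-H_1(\alpha_i))\in\mathbb{P}^1_{\mathbb{F}_q}$. Let $s,\ell$ be positive integers and $Q(x,y,z)=\sum_{j=0}^{\ell}Q_j(x)y^jz^{\ell-j}$, $Q_j\in\mathbb{F}_q[x]$, a non-zero polynomial which has a zero of multiplicity at least $s$ at $(\alpha_i,P_i)$ for every $i=0,\dots,L-1$ and satisfies $\deg_{(1,w_1,w_2)}Q<s\tau_L$. Let $\epsilon_L=|E\cap\{0,\dots,L-1\}|$ and suppose $\epsilon\neq\tau$.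 Then $Q(x,A(x),B(x))=0$ provided that $$\frac{\ell}{s}\ge\frac{\tau_L-\epsilon_L}{\tau-\epsilon}\ \text{ when } \tau>\epsilon,\qquad\text{respectively}\qquad \frac{\ell}{s}\le\frac{\epsilon_L-\tau_L}{\epsilon-\tau}\ \text{ when } \tau<\epsilon.$$
   Context: A generalised Reed–Solomon code $\mathcal{GRS}(n,k,d)$ over $\mathbb{F}_q$ is $\{(v_0C(\alpha_0),\dots,v_{n-1}C(\alpha_{n-1})) : C\in\mathbb{F}_q[x],\ \deg C<k\}$. In the paper, $H_1,H_2$ are intermediate polynomials of the Extended Euclidean Algorithm run on $x^{d-1}$ and the syndrome polynomial of $\vec r$, and positions are indexed so that positions $0,\dots,L-1$ are the $L$ least reliable ones; only the stated properties are used. Points of $\mathbb{P}^1_{\mathbb{F}_q}$ are pairs $(a:b)\neq(0:0)$ up to non-zero scalar multiples. The $(1,w_1,w_2)$-weighted degree of $x^uy^jz^h$ is $u+w_1j+w_2h$, and of a polynomial the maximum over its monomials. A homogeneous $Q(x,y,z)$ has a zero of multiplicity at least $s$ at $(\alpha,(a:b))\in\mathbb{F}_q\times\mathbb{P}^1_{\mathbb{F}_q}$ if: when $b\neq0$, the polynomial $Q(x+\alpha,\,y+a/b,\,1)\in\mathbb{F}_q[x,y]$ has no monomial $x^uy^v$ with $u+v<s$; when $b=0$, the polynomial $Q(x+\alpha,1,z)\in\mathbb{F}_q[x,z]$ has no monomial $x^uz^v$ with $u+v<s$. *)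

From HB Require Import structures.
From mathcomp Require Import all_boot all_order all_algebra all_field.
Set Implicit Arguments.
Unset Strict Implicit.
Unset Printing Implicit Defensive.
Import Order.TTheory GRing.Theory Num.Theory.
Local Open Scope ring_scope.

Definition in_GRS (F : fieldType) (n k : nat) (alpha v : 'I_n -> F)
    (c : 'rV[F]_n) : Prop :=
  exists C : {poly F}, (size C <= k)%N /\ forall i : 'I_n, c 0 i = v i * C.[alpha i].

(* Q(x,y,z) = \sum_{j=0}^l Q_j(x) y^j z^(l-j), given by Qs : 'I_l.+1 -> {poly F}.
   Bivariate polynomials are {poly {poly F}}: outer variable (y or z), inner x.
   mult_ge l Qs s alpha a b : Q has a zero of multiplicity >= s at (alpha,(a:b)). *)
Definition mult_ge (F : fieldType) (l : nat) (Qs : 'I_l.+1 -> {poly F})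
    (s : nat) (alpha a b : F) : Prop :=
  if b != 0 then
    (* Q(x+alpha, y + a/b, 1) *)
    let R : {poly {poly F}} :=
      \sum_(j < l.+1) (Qs j \Po ('X + alpha%:P))%:P * ('X + ((a / b)%:P)%:P) ^+ j in
    forall u v : nat, (u + v < s)%N -> (R`_v)`_u = 0
  else
    (* Q(x+alpha, 1, z) *)
    let R : {poly {poly F}} :=
      \sum_(j < l.+1) (Qs j \Po ('X + alpha%:P))%:P * 'X ^+ (l - j) in
    forall u v : nat, (u + v < s)%N -> (R`_v)`_u = 0.

Definition wdeg_lt (F : fieldType) (l : nat) (Qs : 'I_l.+1 -> {poly F})
    (w1 w2 m : int) : Prop :=
  forall (j : 'I_l.+1) (u : nat), (Qs j)`_u != 0 ->
    (u%:Z + w1 * (j : nat)%:Z + w2 * (l - j)%:Z < m).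

Definition evalQ (F : fieldType) (l : nat) (Qs : 'I_l.+1 -> {poly F})
    (A B : {poly F}) : {poly F} :=
  \sum_(j < l.+1) Qs j * A ^+ j * B ^+ (l - j).

(* degree of a polynomial as an integer (used only for non-zero polynomials) *)
Definition pdeg (F : fieldType) (p : {poly F}) : int := ((size p).-1)%:Z.

From HB Require Import structures.
From mathcomp Require Import all_boot all_order all_algebra all_field.
From mathcomp Require Import zify ring.
Import Order.TTheory GRing.Theory Num.Theory.
Local Open Scope ring_scope.

Set Implicit Arguments.
Unset Strict Implicit.

(* Each error position [i < L] is a root of [Lambda = A H1 + B H2], so the point
   [(A(alpha_i) : B(alpha_i))] equals [P_i], and the zero of multiplicity [s] of
   [Q] at [(alpha_i, P_i)] makes [(x - alpha_i)^s] divide [Q(x, A, B)]: a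
   polynomial of degree [s * epsL] divides [Q(x, A, B)].  Since [deg A] and
   [deg B] exceed [w1] and [w2] by at most [eps - tau], the weighted-degree bound
   gives [deg Q(x, A, B) < s * tauL + l * (eps - tau)], and the hypothesis on
   [l / s] says exactly that this is at most [s * epsL]. *)

Section PolyDivisibility.
Variable F : fieldType.
Implicit Types (p : {poly F}) (a : F).

Lemma dvdp_Xn_coef p m : (forall u, (u < m)%N -> p`_u = 0) -> 'X^m %| p.
Proof.
move=> p_low; rewrite -(poly_take_drop m p) (_ : take_poly m p = 0) ?add0r.
  exact: dvdp_mull.
by apply/polyP => u; rewrite coef_take_poly coef0; case: ltnP => // /p_low.
Qed.

Lemma dvdp_XsubC_exp_shift p a s :
  'X^s %| p \Po ('X + a%:P) -> ('X - a%:P) ^+ s %| p.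
Proof.
case/dvdpP=> q p_shift; rewrite -(comp_polyXaddC_K p a) p_shift.
by rewrite comp_polyM comp_Xn_poly dvdp_mull.
Qed.

Lemma dvdp_prod_XsubC_exp p (xs : seq F) s : uniq xs ->
  (forall x, x \in xs -> ('X - x%:P) ^+ s %| p) ->
  \prod_(x <- xs) ('X - x%:P) ^+ s %| p.
Proof.
elim: xs => [|x xs IHxs] /=; first by rewrite big_nil dvd1p.
case/andP=> x_notin uniq_xs dvd_p; rewrite big_cons Gauss_dvdp.
  by rewrite dvd_p ?mem_head // IHxs // => y y_xs; rewrite dvd_p // inE y_xs orbT.
rewrite prodrXl coprimep_expl // coprimep_expr // coprimep_sym coprimep_XsubC.
by rewrite root_prod_XsubC.
Qed.

Lemma dvdp_prod_XsubC_exp_leq p (xs : seq F) s : p != 0 ->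
  \prod_(x <- xs) ('X - x%:P) ^+ s %| p -> (size xs * s <= (size p).-1)%N.
Proof.
move=> p_nz /(dvdp_leq p_nz); rewrite -!subn1 => /(leq_sub2r 1).
by rewrite subn1 prodrXl size_exp size_prod_XsubC.
Qed.

End PolyDivisibility.

Section HomogeneousEvaluation.
Variable F : fieldType.
Implicit Types (T : {poly {poly F}}) (Y Z c : {poly F}).

Definition homog_eval l T Y Z := \sum_(v < l.+1) T`_v * Y ^+ v * Z ^+ (l - v).

Lemma homog_evalS l T Y Z : (size T <= l.+1)%N ->
  homog_eval l.+1 T Y Z = Z * homog_eval l T Y Z.
Proof.
move=> sizeT; rewrite /homog_eval big_ord_recr /= nth_default // !mul0r addr0.
rewrite mulr_sumr; apply: eq_bigr => v _.
by rewrite subSn -1?ltnS // exprS; ring.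
Qed.

Lemma homog_eval_mulXaddC l T c Y Z : (size T <= l.+1)%N ->
  homog_eval l.+1 (T * ('X + c%:P)) Y Z = (Y + c * Z) * homog_eval l T Y Z.
Proof.
move=> sizeT; rewrite mulrDr [_ * c%:P]mulrC.
have -> : homog_eval l.+1 (T * 'X + c%:P * T) Y Z =
    \sum_(v < l.+2) (T * 'X)`_v * Y ^+ v * Z ^+ (l.+1 - v) + c * homog_eval l.+1 T Y Z.
  rewrite /homog_eval mulr_sumr -big_split /=; apply: eq_bigr => v _.
  by rewrite coefD coefCM; ring.
rewrite homog_evalS // big_ord_recl /= coefMX eqxx !mul0r add0r.
rewrite mulrDl mulrA; congr (_ + _); rewrite /homog_eval mulr_sumr.
by apply: eq_bigr => v _; rewrite coefMX /= exprS; ring.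
Qed.

Lemma homog_evalW l m T Y Z : (m <= l)%N -> (size T <= m.+1)%N ->
  homog_eval l T Y Z = Z ^+ (l - m) * homog_eval m T Y Z.
Proof.
move=> le_ml sizeT; elim: l le_ml => [|l IHl].
  by rewrite leqn0 => /eqP ->; rewrite mul1r.
rewrite leq_eqVlt => /orP[/eqP <-|]; first by rewrite subnn mul1r.
rewrite ltnS => le_ml; rewrite homog_evalS ?(leq_trans sizeT) //.
by rewrite IHl // subSn // exprS mulrA.
Qed.

Lemma homog_eval_XaddC_exp l m c Y Z : (m <= l)%N ->
  homog_eval l (('X + c%:P) ^+ m) Y Z = (Y + c * Z) ^+ m * Z ^+ (l - m).
Proof.
have size_exp m' : (size (('X + c%:P) ^+ m') <= m'.+1)%N.
  by apply: leq_trans (size_poly_exp_leq _ _) _; rewrite size_XaddC mul1n.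
move=> le_ml; rewrite (@homog_evalW l m) // mulrC; congr (_ * _).
elim: m {le_ml} => [|m IHm].
  by rewrite /homog_eval big_ord1 expr0 coefC /= !expr0 !mulr1.
by rewrite exprSr homog_eval_mulXaddC // IHm exprSr mulrC.
Qed.

Lemma homog_eval_sumC l (q : 'I_l.+1 -> {poly F}) (T : 'I_l.+1 -> {poly {poly F}}) Y Z :
  homog_eval l (\sum_(j < l.+1) (q j)%:P * T j) Y Z =
  \sum_(j < l.+1) q j * homog_eval l (T j) Y Z.
Proof.
rewrite /homog_eval; under eq_bigr => v _ do rewrite coef_sum !mulr_suml.
rewrite exchange_big /=; apply: eq_bigr => j _; rewrite mulr_sumr.
by apply: eq_bigr => v _; rewrite coefCM !mulrA.
Qed.

Lemma dvdp_homog_eval l T Y Z s : root Y 0 ->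
  (forall u v : nat, (u + v < s)%N -> (T`_v)`_u = 0) -> 'X^s %| homog_eval l T Y Z.
Proof.
move=> Y0 T_low; have dvdX_Y : 'X %| Y by rewrite -(subr0 'X) -polyC0 dvdp_XsubCl.
apply: (big_ind (dvdp 'X^s)) => [|p q|v _]; [exact: dvdp0 | exact: dvdp_add |].
apply: dvdp_mulr.
have le_s : (s <= s - v + v)%N by lia.
apply: dvdp_trans (dvdp_exp2l 'X le_s) _; rewrite exprD.
apply: dvdp_mul; last exact: dvdp_exp2r.
by apply: dvdp_Xn_coef => u lt_u; apply: T_low; lia.
Qed.

End HomogeneousEvaluation.

Section InterpolationDivisibility.
Variable F : fieldType.
Implicit Types (A B Y Z c : {poly F}).

Lemma evalQ_comp l (Qs : 'I_l.+1 -> {poly F}) A B r :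
  evalQ Qs A B \Po r = evalQ (fun j => Qs j \Po r) (A \Po r) (B \Po r).
Proof.
by rewrite /evalQ rmorph_sum; apply: eq_bigr => j _; rewrite !rmorphM !rmorphXn.
Qed.

Lemma evalQ_homog_eval_shift l (Qs : 'I_l.+1 -> {poly F}) c Y Z :
  evalQ Qs (Y + c * Z) Z =
  homog_eval l (\sum_(j < l.+1) (Qs j)%:P * ('X + c%:P) ^+ j) Y Z.
Proof.
rewrite homog_eval_sumC; apply: eq_bigr => j _.
by rewrite homog_eval_XaddC_exp ?leq_ord // mulrA.
Qed.

Lemma evalQ_homog_eval_swap l (Qs : 'I_l.+1 -> {poly F}) Y Z :
  evalQ Qs Y Z = homog_eval l (\sum_(j < l.+1) (Qs j)%:P * 'X ^+ (l - j)) Z Y.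
Proof.
rewrite homog_eval_sumC; apply: eq_bigr => j _.
have := homog_eval_XaddC_exp 0 Z Y (leq_subr j l).
rewrite polyC0 addr0 mul0r addr0 => ->.
by rewrite subKn ?leq_ord // -mulrA (mulrC (Z ^+ _)) mulrA.
Qed.

Lemma mult_ge_dvdp_evalQ l (Qs : 'I_l.+1 -> {poly F}) s (al a b : F) A B :
  (a != 0) || (b != 0) -> A.[al] * b = B.[al] * a ->
  mult_ge Qs s al a b -> ('X - al%:P) ^+ s %| evalQ Qs A B.
Proof.
move=> ab_nz AB_ab; rewrite /mult_ge => Q_mult; apply: dvdp_XsubC_exp_shift.
(* After the shift [x -> x + al], [Q(x, A, B)] is the homogenised polynomial of
   [mult_ge] evaluated at a pair [(Y, Z)] with [x | Y]. *)
rewrite evalQ_comp; set At := A \Po _; set Bt := B \Po _.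
have At0 : At.[0] = A.[al] by rewrite horner_comp hornerD hornerX hornerC add0r.
have Bt0 : Bt.[0] = B.[al] by rewrite horner_comp hornerD hornerX hornerC add0r.
move: Q_mult; case: ifPn => [b_nz|b0] Q_low.
  have -> : At = (At - (a / b)%:P * Bt) + (a / b)%:P * Bt by rewrite subrK.
  rewrite evalQ_homog_eval_shift; apply: dvdp_homog_eval => //.
  rewrite /root !hornerE At0 Bt0 -(mulfK b_nz A.[al]) AB_ab; apply/eqP; ring.
rewrite evalQ_homog_eval_swap; apply: dvdp_homog_eval => //.
move/negPn/eqP: b0 ab_nz AB_ab => ->; rewrite eqxx orbF mulr0 => a_nz /esym/eqP.
by rewrite /root Bt0 mulf_eq0 (negPf a_nz) orbF.
Qed.

Lemma root_key_equation (A B H1 H2 : {poly F}) x :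
  root (A * H1 + B * H2) x -> A.[x] * - H1.[x] = B.[x] * H2.[x].
Proof. by rewrite /root !hornerE mulrN addr_eq0 => /eqP ->; rewrite opprK. Qed.

Lemma coprimep_horner_neq0 (H1 H2 : {poly F}) x :
  coprimep H1 H2 -> (H2.[x] != 0) || (- H1.[x] != 0).
Proof.
rewrite oppr_eq0 orbC => H12_coprime; case: (eqVneq H1.[x] 0) => //= H1_root.
by apply: (coprimep_root H12_coprime); apply/rootP.
Qed.

End InterpolationDivisibility.

Section DegreeBound.
Variable F : fieldType.
Implicit Types (p q A B : {poly F}).

Lemma pdegM p q : p != 0 -> q != 0 -> pdeg (p * q) = pdeg p + pdeg q.
Proof.
move=> p_nz q_nz; rewrite /pdeg size_mul //.
by move: p_nz q_nz; rewrite -!size_poly_gt0; move: (size p) (size q) => a b; lia.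
Qed.

Lemma pdeg_exp_le p n (b : int) :
  (p == 0) || (pdeg p <= b) -> p ^+ n != 0 -> pdeg (p ^+ n) <= n%:Z * b.
Proof.
case: (eqVneq p 0) => [-> _|_ /= le_pb _].
  by case: n => [|n]; rewrite ?expr0n ?eqxx // mul0r /pdeg size_poly1.
by rewrite /pdeg size_exp PoszM mulrC ler_wpM2l.
Qed.

Lemma pdegD_lt p q (m : int) :
  (p == 0) || (pdeg p < m) -> (q == 0) || (pdeg q < m) ->
  (p + q == 0) || (pdeg (p + q) < m).
Proof.
case: (eqVneq p 0) => [-> _|p_nz]; first by rewrite add0r.
case: (eqVneq q 0) => [-> lt_p _|q_nz]; first by rewrite addr0 (negPf p_nz).
rewrite /= /pdeg => lt_p lt_q; apply/orP; right.
have := size_polyD p q; move: p_nz q_nz lt_p lt_q; rewrite -!size_poly_gt0.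
move: (size p) (size q) (size (p + q)) => a b c; lia.
Qed.

Lemma evalQ_pdeg_lt l (Qs : 'I_l.+1 -> {poly F}) A B (w1 w2 m t : int) :
  wdeg_lt Qs w1 w2 m ->
  (A == 0) || (pdeg A <= w1 + t) -> (B == 0) || (pdeg B <= w2 + t) ->
  (evalQ Qs A B == 0) || (pdeg (evalQ Qs A B) < m + l%:Z * t).
Proof.
move=> Q_wdeg A_deg B_deg.
apply: (big_ind (fun p => (p == 0) || (pdeg p < m + l%:Z * t))) => [|p q|j _].
- by rewrite eqxx.
- exact: pdegD_lt.
have [//|term_nz] := eqVneq (Qs j * A ^+ j * B ^+ (l - j)) 0.
move: (term_nz); rewrite !mulf_eq0 !negb_or => /andP[/andP[Q_nz A_nz] B_nz].
rewrite /= !pdegM ?mulf_neq0 //.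
have Q_lead : (Qs j)`_(size (Qs j)).-1 != 0 by rewrite -lead_coefE lead_coef_eq0.
have := Q_wdeg j _ Q_lead; have := pdeg_exp_le A_deg A_nz.
have := pdeg_exp_le B_deg B_nz.
have -> : l%:Z = j%:Z + (l - j)%N%:Z by rewrite -PoszD subnKC ?leq_ord.
rewrite /pdeg; nia.
Qed.

End DegreeBound.

Lemma ratio_condition_int (s l tauL epsL eps tau : nat) : (0 < s)%N -> eps <> tau ->
  ((eps < tau)%N ->
     ((tauL%:Z - epsL%:Z)%:~R / (tau%:Z - eps%:Z)%:~R <= (l%:R / s%:R : rat))) ->
  ((tau < eps)%N ->
     ((l%:R / s%:R : rat) <= (epsL%:Z - tauL%:Z)%:~R / (eps%:Z - tau%:Z)%:~R)) ->
  (s * tauL)%N%:Z + l%:Z * (eps%:Z - tau%:Z) <= (s * epsL)%N%:Z.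
Proof.
move=> s_gt0 eps_neq ratio_lt ratio_gt; have s_pos : (0 : rat) < s%:R by rewrite ltr0n.
have natrZ (n : nat) : n%:R = n%:Z%:~R :> rat by [].
case: (ltngtP eps tau) => [lt_et|lt_te|//].
- have gap_pos : (0 : rat) < (tau%:Z - eps%:Z)%:~R by rewrite ltr0z subr_gt0 ltz_nat.
  move: (ratio_lt lt_et); rewrite ler_pdivrMr // mulrAC ler_pdivlMr //.
  by rewrite !natrZ -!intrM ler_int; lia.
- have gap_pos : (0 : rat) < (eps%:Z - tau%:Z)%:~R by rewrite ltr0z subr_gt0 ltz_nat.
  move: (ratio_gt lt_te); rewrite ler_pdivlMr // mulrAC ler_pdivrMr //.
  by rewrite !natrZ -!intrM ler_int; lia.
Qed.

Theorem lemma1 (F : finFieldType) (n k d : nat) (alpha v : 'I_n -> F)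
  (c r : 'rV[F]_n) (H1 H2 A B : {poly F}) (L tau tauL s l : nat)
  (Qs : 'I_l.+1 -> {poly F}) :
  (0 < k)%N -> (k <= n)%N -> d = (n - k + 1)%N ->
  injective alpha -> (forall i, v i != 0) ->
  in_GRS k alpha v c ->
  let E := [set i : 'I_n | c 0 i != r 0 i] in
  let eps := #|E| in
  (d < 2 * eps)%N ->
  let Lambda := \prod_(i in E) ('X - (alpha i)%:P) in
  coprimep H1 H2 ->
  Lambda = A * H1 + B * H2 ->
  A != 0 -> pdeg A = eps%:Z - pdeg H1 ->
  (B == 0) || (pdeg B <= eps%:Z - d%:Z + pdeg H1) ->
  (L <= n)%N -> (0 < tau)%N -> (0 < tauL)%N ->
  let w1 := tau%:Z - pdeg H1 in
  let w2 := tau%:Z - d%:Z + pdeg H1 in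
  0 <= w1 -> 0 <= w2 ->
  (0 < s)%N -> (0 < l)%N ->
  (exists j, Qs j != 0) ->
  (forall i : 'I_n, (i < L)%N -> mult_ge Qs s (alpha i) H2.[alpha i] (- H1.[alpha i])) ->
  wdeg_lt Qs w1 w2 (s * tauL)%:Z ->
  let epsL := #|[set i in E | (i < L)%N]| in
  eps <> tau ->
  ((eps < tau)%N ->
     ((tauL%:Z - epsL%:Z)%:~R / (tau%:Z - eps%:Z)%:~R <= (l%:R / s%:R : rat))) ->
  ((tau < eps)%N ->
     ((l%:R / s%:R : rat) <= (epsL%:Z - tauL%:Z)%:~R / (eps%:Z - tau%:Z)%:~R)) ->
  evalQ Qs A B = 0.
Proof.
move=> _ _ _ alpha_inj _ _ E eps _ Lambda H12_coprime Lambda_eq _ A_deg B_deg _ _ _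
  w1 w2 _ _ s_gt0 _ _ Q_mult Q_wdeg epsL eps_neq ratio_lt ratio_gt.
set xs := map alpha (enum [set i in E | (i < L)%N]).
have root_dvdp x : x \in xs -> ('X - x%:P) ^+ s %| evalQ Qs A B.
  case/mapP=> i; rewrite mem_enum inE => /andP[iE iL] ->.
  apply: (mult_ge_dvdp_evalQ (coprimep_horner_neq0 _ H12_coprime) _ (Q_mult i iL)).
  apply: root_key_equation; rewrite -Lambda_eq /Lambda (bigD1 i) //=.
  by rewrite rootM root_XsubC eqxx.
have xs_uniq : uniq xs by rewrite map_inj_uniq // enum_uniq.
have xs_dvdp := dvdp_prod_XsubC_exp xs_uniq root_dvdp.
have A_bound : (A == 0) || (pdeg A <= w1 + (eps%:Z - tau%:Z)).
  have -> : w1 + (eps%:Z - tau%:Z) = eps%:Z - pdeg H1 by rewrite /w1; ring.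
  by rewrite A_deg lexx orbT.
have B_bound : (B == 0) || (pdeg B <= w2 + (eps%:Z - tau%:Z)).
  by have -> : w2 + (eps%:Z - tau%:Z) = eps%:Z - d%:Z + pdeg H1 by rewrite /w2; ring.
have := evalQ_pdeg_lt Q_wdeg A_bound B_bound.
have := ratio_condition_int s_gt0 eps_neq ratio_lt ratio_gt.
have [//|Q_nz /= le_deg lt_deg] := eqVneq (evalQ Qs A B) 0.
have := dvdp_prod_XsubC_exp_leq Q_nz xs_dvdp.
by rewrite size_map -cardE -/epsL; move: lt_deg le_deg; rewrite /pdeg; nia.
Qed.
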